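(* Let $\kappa\ge1$ and $\alpha_1,\alpha_2\in\mathcal{A}(\kappa)$. Then $(\alpha_1\circledast_\kappa\alpha_2)(0)=\alpha_1(0)\alpha_2(0)+\sum_{l=1}^\infty(\kappa+1)\kappa^{l-1}\alpha_1(l)\alpha_2(l)$; $(\alpha_1\circledast_\kappa\alpha_2)(1)=\sum_{l=0}^\infty\kappa^l[\alpha_1(l)\alpha_2(l+1)+\alpha_1(l+1)\alpha_2(l)]$; and for $n\ge2$, $$(\alpha_1\circledast_\kappa\alpha_2)(n)=\sum_{l=0}^\infty\kappa^l[\alpha_1(l)\alpha_2(l+n)+\alpha_1(l+n)\alpha_2(l)]+\sum_{i=1}^{n-1}\alpha_1(i)\alpha_2(n-i)+\sum_{i=1}^{n-1}\sum_{l=1}^\infty(\kappa-1)\kappa^{l-1}\alpha_1(l+i)\alpha_2(l+n-i).$$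
   Context: $\mathrm{T}_\kappa=(V_\kappa,E_\kappa)$ is the Cayley tree of order $\kappa$ (infinite connected acyclic graph, every vertex of degree $\kappa+1$), $d$ its graph distance. $\mathcal{A}(\kappa)$ is the set of functions $\alpha:\mathbb{N}_0\to\mathbb{C}$ such that the kernel $T_\alpha(x,y)=\alpha(d(x,y))$ defines a bounded operator on $\ell^2(V_\kappa)$. Fix a sequence $(v_n)_{n\ge0}$ in $V_\kappa$ with $d(v_k,v_n)=|k-n|$ for all $k,n\ge0$; for $\alpha_1,\alpha_2\in\mathcal{A}(\kappa)$ define $(\alpha_1\circledast_\kappa\alpha_2)(n)=\sum_{x\in V_\kappa}\alpha_1(d(v_0,x))\alpha_2(d(x,v_n))$ for $n\ge0$ (this series converges and does not depend on the choice of $(v_n)$). *)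

From HB Require Import structures.
From mathcomp Require Import all_boot all_order all_algebra.
From mathcomp Require Import complex.
From mathcomp Require Import reals.
Set Implicit Arguments. Unset Strict Implicit. Unset Printing Implicit Defensive.
Import Order.TTheory GRing.Theory Num.Theory.
Local Open Scope ring_scope.

(** * The Cayley tree T_kappa (every vertex of degree kappa+1).
    Concrete model: a vertex is the path from a fixed root, i.e. a finite
    sequence [a_0; a_1; ...; a_k] with a_0 < kappa+1 and a_i < kappa (i >= 1).  The root [::] has kappa+1 neighbours, every other
    vertex has one parent and kappa children, and the graph is a tree. *)
Definition valid_vertex (kappa : nat) (s : seq nat) : bool :=
  match s with
  | [::] => true
  | a :: t => (a < kappa.+1)%N && all (fun b => (b < kappa)%N) t
  end.

Definition vertex (kappa : nat) := {s : seq nat | valid_vertex kappa s}.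

(** adjacency in T_kappa (for documentation; the distance below is the
    graph distance of this tree) *)
Definition tadj (kappa : nat) (x y : vertex kappa) : Prop :=
  (exists b, val y = rcons (val x) b) \/ (exists b, val x = rcons (val y) b).

Fixpoint lcp (s t : seq nat) : nat :=
  match s, t with
  | a :: s', b :: t' => if a == b then (lcp s' t').+1 else 0%N
  | _, _ => 0%N
  end.

(** graph distance in the tree: go up to the last common ancestor and down *)
Definition tdist (kappa : nat) (x y : vertex kappa) : nat :=
  (size (val x) + size (val y) - 2 * lcp (val x) (val y))%N.

Section Analysis.
Variable R : realType.
Local Notation C := R[i].

(** The kernel T_alpha(x,y) = alpha(d(x,y)) defines a bounded operator on
    l^2(V_kappa): there is M with ||T_alpha f||^2 <= M ||f||^2 for every
    finitely supported f (support in the finite set S), where ||T_alpha f||^2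
    is the supremum over finite sets S' of sum_{x in S'} |(T_alpha f)(x)|^2. *)
Definition in_A (kappa : nat) (alpha : nat -> C) : Prop :=
  exists M : R, forall (S S' : seq (vertex kappa)) (f : vertex kappa -> C),
    uniq S -> uniq S' ->
    \sum_(x <- S') `| \sum_(y <- S) alpha (tdist x y) * f y | ^+ 2
      <= (M%:C)%C * \sum_(y <- S) `| f y | ^+ 2.

(** unordered (order independent) summation of a family over the vertices:
    the net of finite partial sums converges to s *)
Definition has_usum (kappa : nat) (F : vertex kappa -> C) (s : C) : Prop :=
  forall e : R, 0 < e -> exists F0 : seq (vertex kappa),
    forall Fs : seq (vertex kappa), uniq Fs -> {subset F0 <= Fs} ->
      `| \sum_(x <- Fs) F x - s | < (e%:C)%C.

Definition series_to (u : nat -> C) (s : C) : Prop :=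
  forall e : R, 0 < e -> exists N : nat, forall m : nat, (N <= m)%N ->
    `| \sum_(0 <= l < m) u l - s | < (e%:C)%C.

End Analysis.

From HB Require Import structures.
From mathcomp Require Import all_boot all_order all_algebra.
From mathcomp Require Import complex reals classical_sets boolp.
From mathcomp Require Import zify lra.
Set Implicit Arguments. Unset Strict Implicit. Unset Printing Implicit Defensive.
Import Order.TTheory GRing.Theory Num.Theory Normc.

(* T_kappa is the Cayley graph of the free product of kappa+1 copies of Z/2.
   Translating v_0 to the identity makes every vertex a reduced word and v_n a
   word w of length n.  A vertex x leaves the geodesic [v_0, v_n] at some depth
   j <= n and lies at some height r above it; then d(v_0, x) = j + r and
   d(x, v_n) = n - j + r, and there are [shell_count kappa n j r] such x.
   Summing shell by shell gives the three formulas.  Everything converges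
   absolutely: alpha(d(., y)) is a column of a bounded operator, hence square
   summable, and |alpha1 alpha2| <= (|alpha1|^2 + |alpha2|^2) / 2. *)

(** * Reduced words and the tree model *)

Lemma lcpC s t : lcp s t = lcp t s.
Proof. by elim: s t => [|a s IH] [|b t] //=; rewrite eq_sym IH. Qed.

Lemma lcp_leq_size s t : (lcp s t <= size s)%N.
Proof. by elim: s t => [|a s IH] [|b t] //=; case: eqP => // _; apply: IH. Qed.

Lemma lcp_cat s y t : lcp (s ++ y) (s ++ t) = (size s + lcp y t)%N.
Proof. by elim: s => [|a s IH] //=; rewrite eqxx IH. Qed.

Lemma take_lcp s t : take (lcp s t) s = take (lcp s t) t.
Proof. by elim: s t => [|a s IH] [|b t] //=; case: eqP => [->|] //=; rewrite IH. Qed.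

Lemma nth_lcp x0 s t : (lcp s t < size s)%N -> (lcp s t < size t)%N ->
  nth x0 s (lcp s t) != nth x0 t (lcp s t).
Proof. by elim: s t => [|a s IH] [|b t] //=; case: (eqVneq a b) => //= _; apply: IH. Qed.

Lemma size_filter_predC1 (T : eqType) (x : T) (s : seq T) :
  uniq s -> size [seq y <- s | y != x] = (size s - (x \in s))%N.
Proof.
move=> us; rewrite -(rem_filter x us); have [hx|hx] := boolP (x \in s).
  by rewrite size_rem // subn1.
by rewrite rem_id // subn0.
Qed.

Lemma uniq_flatten_map (S T : eqType) (f : S -> seq T) (s : seq S) :
  uniq s -> (forall x, x \in s -> uniq (f x)) ->
  (forall x y z, x \in s -> y \in s -> z \in f x -> z \in f y -> x = y) ->
  uniq (flatten [seq f x | x <- s]).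
Proof.
elim: s => [|a s IH] //= /andP [has hs] hu hd; rewrite cat_uniq hu ?mem_head //=.
rewrite IH //; first last.
- by move=> x y z hx hy; apply: hd; rewrite in_cons ?hx ?hy orbT.
- by move=> x hx; apply: hu; rewrite in_cons hx orbT.
rewrite andbT; apply/hasPn => z /flatten_mapP [x hx hzx]; apply/negP => hza.
by move: has; rewrite (hd a x z) ?mem_head ?in_cons ?hx ?orbT.
Qed.

Definition word_dist (s t : seq nat) := (size s + size t - 2 * lcp s t)%N.

Lemma word_distC s t : word_dist s t = word_dist t s.
Proof. by rewrite /word_dist lcpC addnC. Qed.

Lemma word_dist_nil s : word_dist s [::] = size s.
Proof. by case: s => [|a s]; rewrite /word_dist /= ?addn0 ?muln0 ?subn0. Qed.

Lemma word_dist_cons a s t : word_dist (a :: s) (a :: t) = word_dist s t.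
Proof.
rewrite /word_dist /= eqxx.
have := lcp_leq_size s t; have := lcp_leq_size t s; rewrite lcpC; lia.
Qed.

Definition head_neq (c : nat) (s : seq nat) := if s is b :: _ then b != c else true.

Lemma lcp_head_neq c s t : head_neq c s -> lcp s (c :: t) = 0%N.
Proof. by case: s => [|b s] //= /negbTE ->. Qed.

Lemma word_dist_head_neq a s t : head_neq a s -> head_neq a t ->
  word_dist (a :: s) t = word_dist s (a :: t).
Proof.
move=> hs ht; rewrite /word_dist lcpC !lcp_head_neq //=; lia.
Qed.

Section ReducedWords.
Variable K : nat.
Implicit Types (a b p : nat) (s t x y z g : seq nat).

(* With the sentinel [p = K], [reduced K] is the set of reduced words of the
   free product of K copies of Z/2; [reduced p s] moreover forbids [s] to
   start with [p]. *)
Fixpoint reduced p s : bool :=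
  if s is b :: t then [&& b < K, b != p & reduced b t] else true.

Definition gen_mul a z := if z is b :: t then if a == b then t else a :: z else [:: a].

(* [translate g z] is g^-1 z, generators being involutions. *)
Definition translate g z := foldl (fun z a => gen_mul a z) z g.

Lemma reduced_head_neq p q s : reduced p s -> head_neq q s -> reduced q s.
Proof. by case: s => [|b s] //= /and3P [-> _ ->] ->. Qed.

Lemma head_neq_reduced p s : reduced p s -> head_neq p s.
Proof. by case: s => [|b s] //= /and3P []. Qed.

Lemma head_neqK_reduced p s : reduced p s -> head_neq K s.
Proof. by case: s => [|b s] //= /andP [hb _]; rewrite neq_ltn hb. Qed.

Lemma reducedW p s : reduced p s -> reduced K s.
Proof. by move=> hs; apply: reduced_head_neq hs (head_neqK_reduced hs). Qed.

Lemma reduced_letters p s : reduced p s -> all (fun a => a < K) s.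
Proof. by elim: s p => [|b s IH] p //= /and3P [-> _ /IH]. Qed.

Lemma reduced_cat p s t : reduced p (s ++ t) = reduced p s && reduced (last p s) t.
Proof. by elim: s p => [|a s IH] p //=; rewrite IH !andbA. Qed.

Lemma nth_reduced_neq p s (x0 : nat) j : reduced p s -> j.+1 < size s ->
  nth x0 s j.+1 != nth x0 s j.
Proof.
elim: s p j => [|a s IH] p [|j] //=.
- by case: s {IH} => [|b s] //= /and3P [_ _ /and3P [_ hba _]].
- by move=> /and3P [_ _ hs] hj; apply: IH hs hj.
Qed.

Variant gen_mul_spec a z : seq nat -> Type :=
| GenMulCancel t of z = a :: t & reduced a t : gen_mul_spec a z t
| GenMulPush of head_neq a z : gen_mul_spec a z (a :: z).

Lemma gen_mulP a z : reduced K z -> gen_mul_spec a z (gen_mul a z).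
Proof.
case: z => [|b t] /=; first by move=> _; apply: GenMulPush.
case/and3P=> _ _ ht; case: (eqVneq a b) => [->|hab]; first exact: GenMulCancel.
by apply: GenMulPush; rewrite /= eq_sym.
Qed.

Lemma gen_mul_head_neq a z : head_neq a z -> gen_mul a z = a :: z.
Proof. by case: z => [|b z] //= /negbTE; rewrite eq_sym => ->. Qed.

Lemma reduced_gen_mul a z : a < K -> reduced K z -> reduced K (gen_mul a z).
Proof.
move=> ha hz; case: (gen_mulP a hz) => [t _ ht | hza]; first exact: reducedW ht.
by rewrite /= ha neq_ltn ha (reduced_head_neq hz hza).
Qed.

Lemma gen_mulK a z : reduced K z -> gen_mul a (gen_mul a z) = z.
Proof.
move=> hz; case: (gen_mulP a hz) => [t -> ht | _]; last by rewrite /= eqxx.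
by rewrite gen_mul_head_neq // head_neq_reduced.
Qed.

Lemma word_dist_gen_mul a x y : reduced K x -> reduced K y ->
  word_dist (gen_mul a x) (gen_mul a y) = word_dist x y.
Proof.
move=> hx hy; case: (gen_mulP a hx) => [x' -> hx' | hxa];
  case: (gen_mulP a hy) => [y' -> hy' | hya].
- by rewrite word_dist_cons.
- by rewrite word_dist_head_neq // head_neq_reduced.
- by rewrite word_distC -word_dist_head_neq 1?word_distC // head_neq_reduced.
- by rewrite word_dist_cons.
Qed.

Lemma reduced_translate g z : all (fun a => a < K) g -> reduced K z ->
  reduced K (translate g z).
Proof.
by elim: g z => [|a g IH] z //= /andP [ha hg] hz; apply: IH => //; apply: reduced_gen_mul.
Qed.

Lemma word_dist_translate g x y : all (fun a => a < K) g -> reduced K x -> reduced K y ->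
  word_dist (translate g x) (translate g y) = word_dist x y.
Proof.
elim: g x y => [|a g IH] x y //= /andP [ha hg] hx hy.
by rewrite IH ?reduced_gen_mul // word_dist_gen_mul.
Qed.

Lemma translate_self g : translate g g = [::].
Proof. by elim: g => [|a g IH] //=; rewrite eqxx. Qed.

Lemma translateK g z : all (fun a => a < K) g -> reduced K z ->
  translate (rev g) (translate g z) = z.
Proof.
elim: g z => [|a g IH] z //= /andP [ha hg] hz.
by rewrite rev_cons /translate foldl_rcons -/(translate _ _) IH ?reduced_gen_mul ?gen_mulK.
Qed.

End ReducedWords.

(* A vertex of the tree is the sequence of child indices along the path from
   the root; the child index [a] below an edge labelled [p] is the letter
   [skip p a], the [a]-th letter different from [p]. *)
Definition skip (p a : nat) := if a < p then a else a.+1.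
Definition unskip (p b : nat) := if b < p then b else b.-1.

Fixpoint word_of_path (p : nat) (s : seq nat) : seq nat :=
  if s is a :: t then skip p a :: word_of_path (skip p a) t else [::].
Fixpoint path_of_word (p : nat) (z : seq nat) : seq nat :=
  if z is b :: t then unskip p b :: path_of_word b t else [::].

Lemma size_word_of_path p s : size (word_of_path p s) = size s.
Proof. by elim: s p => [|a s IH] p //=; rewrite IH. Qed.

Lemma skip_inj p : injective (skip p).
Proof. by move=> a b; rewrite /skip; case: ifP; case: ifP; lia. Qed.

Lemma lcp_word_of_path p s t : lcp (word_of_path p s) (word_of_path p t) = lcp s t.
Proof.
elim: s p t => [|a s IH] p [|b t] //=; rewrite (inj_eq (@skip_inj p)).
by case: eqP => [->|]; rewrite ?IH.
Qed.

Lemma word_of_pathK p s : path_of_word p (word_of_path p s) = s.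
Proof.
elim: s p => [|a s IH] p //=; rewrite IH; congr (_ :: _).
by rewrite /unskip /skip; case: ifP; case: ifP => //=; lia.
Qed.

Lemma path_of_wordK K p z : reduced K p z -> word_of_path p (path_of_word p z) = z.
Proof.
elim: z p => [|b z IH] p //= /and3P [_ hbp hz].
have -> : skip p (unskip p b) = b.
  by move: hbp; rewrite /skip /unskip; case: ifP; case: ifP => /=; lia.
by rewrite IH.
Qed.

Section TreeModel.
Variable kappa : nat.
Local Notation K := kappa.+1.

Lemma reduced_word_of_path s : valid_vertex kappa s -> reduced K K (word_of_path K s).
Proof.
have children p t : p < K -> all (fun b => b < kappa) t -> reduced K p (word_of_path p t).
  elim: t p => [|a t IH] p //= hp /andP [ha ht].
  have hs : skip p a < K by rewrite /skip; case: ifP; lia.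
  apply/and3P; split=> //; last exact: IH.
  by rewrite /skip; case: ifP; lia.
case: s => [|a t] //= /andP [ha ht]; rewrite /skip ha /= ha neq_ltn ha /=.
exact: children.
Qed.

Lemma valid_path_of_word z : reduced K K z -> valid_vertex kappa (path_of_word K z).
Proof.
have children p t : p < K -> reduced K p t -> all (fun b => b < kappa) (path_of_word p t).
  elim: t p => [|b t IH] p //= hp /and3P [hb hbp ht].
  by rewrite (IH b) // andbT; move: hbp; rewrite /unskip; case: ifP; lia.
case: z => [|b t] //= /and3P [hb _ ht]; rewrite /unskip hb hb /=.
exact: children.
Qed.

Variable v0 : vertex kappa.
Local Notation g0 := (word_of_path K (val v0)).

Lemma letters_g0 : all (fun a => a < K) g0.
Proof. exact/reduced_letters/reduced_word_of_path/valP. Qed.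

(* The word of [x] seen from [v0], i.e. g0^-1 x in the free product. *)
Definition word_at (x : vertex kappa) := translate g0 (word_of_path K (val x)).
Definition vertex_at (z : seq nat) : vertex kappa :=
  insubd v0 (path_of_word K (translate (rev g0) z)).

Lemma reduced_word_at x : reduced K K (word_at x).
Proof. exact/reduced_translate/reduced_word_of_path/valP/letters_g0. Qed.

Lemma tdist_word_at x y : tdist x y = word_dist (word_at x) (word_at y).
Proof.
rewrite /word_at (@word_dist_translate K) ?letters_g0 ?reduced_word_of_path ?valP //.
by rewrite /word_dist /tdist !size_word_of_path lcp_word_of_path.
Qed.

Lemma word_at_root : word_at v0 = [::].
Proof. exact: translate_self. Qed.

Lemma size_word_at x : size (word_at x) = tdist v0 x.
Proof. by rewrite tdist_word_at word_at_root word_distC word_dist_nil. Qed.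

Lemma vertex_atK z : reduced K K z -> word_at (vertex_at z) = z.
Proof.
move=> hz; have hr : reduced K K (translate (rev g0) z).
  by apply: reduced_translate; rewrite ?all_rev ?letters_g0.
rewrite /word_at /vertex_at insubdK; last exact: valid_path_of_word.
by rewrite (path_of_wordK hr) -{1}(revK g0) (@translateK K) ?all_rev ?letters_g0.
Qed.

Lemma word_at_inj : injective word_at.
Proof.
move=> x y /(congr1 (translate (rev g0))).
rewrite !(@translateK K) ?letters_g0 ?reduced_word_of_path ?valP //.
by move/(congr1 (path_of_word K)); rewrite !word_of_pathK => /val_inj.
Qed.

End TreeModel.

(** * Shells around a geodesic *)

(* Number of vertices x with d(v0, x) = j + r and d(x, vn) = n - j + r,
   for d(v0, vn) = n and j <= n. *)
Definition shell_count (kappa n j r : nat) : nat :=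
  if r is r'.+1 then ((kappa.+1 - (0 < j) - (j < n)) * kappa ^ r')%N else 1%N.

Section Shells.
Variable kappa : nat.
Local Notation K := kappa.+1.
Implicit Types (p c j r m : nat) (y z : seq nat).

Definition fresh_letters p c := [seq b <- [seq b <- iota 0 K | b != p] | b != c].

Lemma mem_fresh_letters p c b :
  (b \in fresh_letters p c) = [&& b < K, b != p & b != c].
Proof.
by rewrite !mem_filter mem_iota /=; case: (b < K) (b != p) (b != c) => [] [] [].
Qed.

Lemma size_fresh_letters p c :
  size (fresh_letters p c) = (K - (p < K) - ((c < K) && (c != p)))%N.
Proof.
rewrite !size_filter_predC1 ?filter_uniq ?iota_uniq // size_iota mem_filter.
by rewrite !mem_iota /= andbC.
Qed.

Fixpoint tails p c r : seq (seq nat) :=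
  if r is r'.+1 then [seq b :: y | b <- fresh_letters p c, y <- tails b K r']
  else [:: [::]].

Lemma mem_tails p c r y :
  (y \in tails p c r) = [&& reduced K p y, size y == r & head_neq c y].
Proof.
elim: r p c y => [|r IH] p c [|b y] /=; rewrite ?mem_seq1 ?andbF //.
- by apply/allpairsPdep => -[? [? []]].
apply/allpairsPdep/idP => [[b' [y' [hb hy [-> ->]]]] | ].
  move: hb hy; rewrite mem_fresh_letters IH eqSS.
  by case/and3P => -> -> -> /and3P [-> -> _].
rewrite eqSS => /and3P [/and3P [hb hbp hy] hs hbc]; exists b, y; split=> //.
  by rewrite mem_fresh_letters hb hbp.
by rewrite IH hy hs (head_neqK_reduced hy).
Qed.

Lemma uniq_tails p c r : uniq (tails p c r).
Proof.
elim: r p c => [|r IH] p c //=; apply: uniq_flatten_map.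
- by rewrite !filter_uniq ?iota_uniq.
- by move=> b _; rewrite map_inj_uniq // => ? ? [].
- by move=> b b' z _ _ /mapP [y _ ->] /mapP [y' _ []].
Qed.

Lemma size_tails_root b r : b < K -> size (tails b K r) = (kappa ^ r)%N.
Proof.
elim: r b => [|r IH] b hb //=.
rewrite size_allpairs_dep sumnE big_map (eq_big_seq (fun=> kappa ^ r)%N); last first.
  by move=> b'; rewrite mem_fresh_letters => /andP [/IH].
rewrite big_const_seq count_predT iter_addn_0 size_fresh_letters hb ltnn /= expnS.
by rewrite subn1 subn0 mulnC.
Qed.

Lemma size_tails p c r :
  size (tails p c r.+1) = (size (fresh_letters p c) * kappa ^ r)%N.
Proof.
rewrite /= size_allpairs_dep sumnE big_map (eq_big_seq (fun=> kappa ^ r)%N); last first.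
  by move=> b; rewrite mem_fresh_letters => /andP [/size_tails_root].
by rewrite big_const_seq count_predT iter_addn_0 mulnC.
Qed.

Variable w : seq nat.
Hypothesis hw : reduced K K w.
Local Notation n := (size w).

(* The letters of [w] before and at position [j]; [K] stands for "none". *)
Definition prev_letter j := if j is j'.+1 then nth K w j' else K.
Definition next_letter j := nth K w j.

Definition shell j r := [seq take j w ++ y | y <- tails (prev_letter j) (next_letter j) r].
Definition height z := (size z - lcp z w)%N.
Definition low_words m :=
  flatten [seq flatten [seq shell j r | r <- iota 0 m] | j <- iota 0 n.+1].

Lemma nth_w_lt j : j < n -> nth K w j < K.
Proof. exact: (all_nthP K (reduced_letters hw)). Qed.

Lemma last_take_w j : j <= n -> last K (take j w) = prev_letter j.
Proof. by case: j => [|j] hj; rewrite ?take0 // (last_nth K) size_takel //= nth_take. Qed.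

Lemma reduced_take_w j : reduced K K (take j w).
Proof. by move: hw; rewrite -{1}(cat_take_drop j w) reduced_cat => /andP []. Qed.

Lemma shell_props j r z : j <= n -> z \in shell j r ->
  [/\ reduced K K z, size z = (j + r)%N & lcp z w = j].
Proof.
move=> hj /mapP [y]; rewrite mem_tails => /and3P [hy /eqP hs hyj] ->.
split; first by rewrite reduced_cat reduced_take_w last_take_w.
  by rewrite size_cat size_takel // hs.
rewrite -{2}(cat_take_drop j w) lcp_cat size_takel //.
case: (ltnP j n) => hjn; first by rewrite (drop_nth K hjn) lcp_head_neq ?addn0.
by rewrite drop_oversize // lcpC addn0.
Qed.

Lemma shell_lcp_height z : reduced K K z -> z \in shell (lcp z w) (height z).
Proof.
move=> hz; set j := lcp z w.
have hjn : j <= n by rewrite /j lcpC lcp_leq_size.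
have ez : z = take j w ++ drop j z by rewrite -take_lcp cat_take_drop.
rewrite {1}ez; apply: map_f; rewrite mem_tails size_drop eqxx /=.
move: hz; rewrite {1}ez reduced_cat last_take_w // => /andP [_ hy]; rewrite hy /=.
case ey: (drop j z) hy => [|b y] //= /andP [hb _].
have hbz : nth K z j = b by rewrite -[j]addn0 -nth_drop ey.
rewrite /next_letter -hbz; case: (ltnP j n) => hjn'.
  apply: nth_lcp => //; rewrite ltnNge; apply/negP => hzj.
  by move: ey; rewrite drop_oversize.
by rewrite (nth_default K hjn') hbz neq_ltn hb.
Qed.

Lemma mem_low_words m z : (z \in low_words m) = reduced K K z && (height z < m).
Proof.
apply/flatten_mapP/andP => [[j] | [hz hm]].
  rewrite mem_iota ltnS => /andP [_ hj] /flatten_mapP [r]; rewrite mem_iota /= => hr hzr.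
  by have [-> hs hl] := shell_props hj hzr; rewrite /height hs hl addKn.
exists (lcp z w); first by rewrite mem_iota ltnS lcpC lcp_leq_size.
by apply/flatten_mapP; exists (height z); rewrite ?mem_iota ?shell_lcp_height.
Qed.

Lemma uniq_low_words m : uniq (low_words m).
Proof.
apply: uniq_flatten_map; first exact: iota_uniq.
  move=> j; rewrite mem_iota ltnS => /andP [_ hj].
  apply: uniq_flatten_map; first exact: iota_uniq.
    move=> r _; rewrite map_inj_uniq ?uniq_tails // => y y' /(congr1 (drop j)).
    by rewrite !drop_size_cat // size_takel.
  move=> r r' z _ _ h h'.
  by have [_ e _] := shell_props hj h; have [_ e' _] := shell_props hj h'; lia.
move=> j j' z; rewrite !mem_iota !ltnS => /andP [_ hj] /andP [_ hj'].
move=> /flatten_mapP [r _ h] /flatten_mapP [r' _ h'].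
by have [_ _ <-] := shell_props hj h; have [_ _ <-] := shell_props hj' h'.
Qed.

Lemma big_low_words (V : nmodType) (f : seq nat -> V) m :
  (\sum_(z <- low_words m) f z
   = \sum_(0 <= j < n.+1) \sum_(0 <= r < m) \sum_(z <- shell j r) f z)%R.
Proof.
rewrite /low_words big_flatten big_map /index_iota !subn0; apply: eq_bigr => j _.
by rewrite big_flatten big_map.
Qed.

Lemma sum_low_words_filter (V : nmodType) (f : seq nat -> V) (Fs : seq (seq nat)) m :
  uniq Fs -> all (reduced K K) Fs -> {subset low_words m <= Fs} ->
  (\sum_(z <- Fs | (height z < m)%N) f z = \sum_(z <- low_words m) f z)%R.
Proof.
move=> uF aF sF; rewrite -big_filter; apply/perm_big/uniq_perm.
- exact: filter_uniq.
- exact: uniq_low_words.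
move=> z; rewrite mem_filter mem_low_words; apply/andP/andP => [[h1 h2] | [h1 h2]].
  by split=> //; apply: (allP aF).
by split=> //; apply: sF; rewrite mem_low_words h1.
Qed.

Lemma low_words_exhaust (Fs : seq (seq nat)) m :
  all (reduced K K) Fs -> exists2 M, m <= M & {subset Fs <= low_words M}.
Proof.
move=> aF; exists (maxn m (\max_(z <- Fs) height z).+1); first exact: leq_maxl.
move=> z hz; rewrite mem_low_words (allP aF z hz) /= leq_max ltnS.
by rewrite (leq_bigmax_seq _ hz) ?orbT.
Qed.

Lemma size_shell j r : j <= n -> size (shell j r) = shell_count kappa n j r.
Proof.
move=> hj; rewrite size_map; case: r => [|r] //; rewrite size_tails size_fresh_letters.
rewrite /shell_count; congr ((K - _ - _) * _)%N.
  by case: j hj => [|j] hj; rewrite /= ?ltnn // (nth_w_lt hj).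
rewrite /next_letter; case: (ltnP j n) => hjn; last by rewrite nth_default // ltnn.
rewrite (nth_w_lt hjn) /=; case: j hj hjn => [|j] hj hjn /=.
  by rewrite neq_ltn (nth_w_lt hjn).
by rewrite (nth_reduced_neq _ hw hjn).
Qed.

End Shells.

Local Open Scope ring_scope.

(** * Absolutely convergent series *)

Definition series (V : nmodType) (u : nat -> V) (m : nat) := \sum_(0 <= l < m) u l.

Lemma seriesS (V : nmodType) (u : nat -> V) m : series u m.+1 = u 0%N + series (fun l => u l.+1) m.
Proof. by rewrite /series big_nat_recl. Qed.

Lemma ler_sum_subset (R : numDomainType) (T : eqType) (s t : seq T) (f : T -> R) :
  uniq s -> uniq t -> {subset s <= t} -> (forall x, 0 <= f x) ->
  \sum_(x <- s) f x <= \sum_(x <- t) f x.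
Proof.
move=> us ut st f0.
have hp : perm_eq [seq x <- t | x \in s] s.
  by apply: uniq_perm; rewrite ?filter_uniq // => x; rewrite mem_filter andb_idr //; apply: st.
rewrite [leRHS](bigID (fun x => x \in s)) /= -(perm_big _ hp) big_filter lerDl.
exact: sumr_ge0.
Qed.

Section Convergence.
Variable V : numFieldType.
Implicit Types (a b : nat -> V) (L : V).

Definition tends_to a L :=
  forall e : V, 0 < e -> exists N, forall m, (N <= m)%N -> `|a m - L| < e.

Lemma eq_tends_to a b L : a =1 b -> tends_to a L -> tends_to b L.
Proof. by move=> /funext ->. Qed.

Lemma tends_to_cst L : tends_to (fun=> L) L.
Proof. by move=> e he; exists 0%N => m _; rewrite subrr normr0. Qed.

Lemma tends_toD a b La Lb : tends_to a La -> tends_to b Lb ->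
  tends_to (fun m => a m + b m) (La + Lb).
Proof.
move=> ha hb e he; have he2 : 0 < e / 2 by rewrite divr_gt0.
have [Na hNa] := ha _ he2; have [Nb hNb] := hb _ he2.
exists (maxn Na Nb) => m; rewrite geq_max => /andP [hma hmb].
rewrite (splitr e) opprD addrACA; apply: le_lt_trans (ler_normD _ _) _.
exact: ltrD (hNa _ hma) (hNb _ hmb).
Qed.

Lemma tends_toN a L : tends_to a L -> tends_to (fun m => - a m) (- L).
Proof.
by move=> ha e /ha [N hN]; exists N => m /hN; rewrite -opprD normrN.
Qed.

Lemma tends_to_sum (I : eqType) (s : seq I) (a : I -> nat -> V) (L : I -> V) :
  (forall i, i \in s -> tends_to (a i) (L i)) ->
  tends_to (fun m => \sum_(i <- s) a i m) (\sum_(i <- s) L i).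
Proof.
elim: s => [|i s IH] h.
  by rewrite big_nil; apply: eq_tends_to (tends_to_cst 0) => m; rewrite big_nil.
rewrite big_cons; apply: eq_tends_to (tends_toD (h i (mem_head _ _)) (IH _)).
  by move=> m; rewrite big_cons.
by move=> j hj; apply: h; rewrite in_cons hj orbT.
Qed.

Lemma tends_to_succ a L : tends_to a L -> tends_to (fun m => a m.+1) L.
Proof. by move=> ha e /ha [N hN]; exists N => m hm; apply/hN/leqW. Qed.

Lemma tends_to_series_succ (u : nat -> V) S : tends_to (series u) S ->
  tends_to (series (fun l => u l.+1)) (S - u 0%N).
Proof.
move=> hu; apply: eq_tends_to (tends_toD (tends_to_succ hu) (tends_to_cst (- u 0%N))).
by move=> m; rewrite seriesS addrAC subrr add0r.
Qed.

Lemma tends_to_cauchy a L : tends_to a L -> forall e, 0 < e ->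
  exists N, forall m k, (N <= m)%N -> (N <= k)%N -> `|a k - a m| < e.
Proof.
move=> ha e he; have [N hN] := ha _ (divr_gt0 he (ltr0n _ 2)).
exists N => m k hm hk; rewrite (splitr e).
have -> : a k - a m = (a k - L) - (a m - L) by rewrite opprB addrA subrK.
by apply: le_lt_trans (ler_normB _ _) _; apply: ltrD; [apply: hN | apply: hN].
Qed.

End Convergence.

Section RealSeries.
Variable R : realType.

Lemma nondecreasing_tends_to (a : nat -> R) B :
  (forall m, a m <= a m.+1) -> (forall m, a m <= B) -> tends_to a (sup (range a)).
Proof.
move=> ha hB e he.
have hs : has_sup (range a) by split; [exists (a 0%N), 0%N | exists B => _ [m _ <-]].
have [_ [N _ <-] hN] := sup_adherent he hs.
exists N => m hNm; have hm : a m <= sup (range a) by apply: sup_upper_bound => //; exists m.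
have := homo_leq (@lexx _ R) (fun _ _ _ => @le_trans _ R _ _ _) ha hNm.
by rewrite ler0_norm ?subr_le0 // opprB; lra.
Qed.

Lemma abs_summable_tends_to (u : nat -> R) B :
  (forall m, series (fun l => `|u l|) m <= B) -> exists L, tends_to (series u) L.
Proof.
move=> hB; pose P := series (fun l => `|u l| + u l).
have hP : tends_to P (sup (range P)).
  apply: (@nondecreasing_tends_to _ (B *+ 2)) => m.
    rewrite /P /series big_nat_recr //= lerDl.
    by have := ler_norm (- u m); rewrite normrN; lra.
  rewrite /P /series big_split mulr2n; apply: lerD (hB m) (le_trans _ (hB m)).
  by apply: ler_sum => l _; apply: ler_norm.
have hA : tends_to (series (fun l => `|u l|)) (sup (range (series (fun l => `|u l|)))).
  apply: nondecreasing_tends_to hB => m.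
  by rewrite /series big_nat_recr //= lerDl.
exists (sup (range P) - sup (range (series (fun l => `|u l|)))).
apply: eq_tends_to (tends_toD hP (tends_toN hA)) => m.
by rewrite /P /series big_split /= addrAC subrr add0r.
Qed.

End RealSeries.

Section ComplexSeries.
Variable R : realType.
Local Notation C := R[i].
Local Open Scope complex_scope.

Lemma normc_ge0 (z : C) : 0 <= normc z.
Proof. by case: z => a b; apply: sqrtr_ge0. Qed.

Lemma normc_real (x : R) : normc x%:C = `|x|.
Proof. by rewrite /normc /= expr0n addr0 sqrtr_sqr. Qed.

Lemma normc_i : normc ('i : C) = 1.
Proof. by rewrite /normc /= expr0n add0r expr1n sqrtr1. Qed.

Lemma normc_Re (z : C) : `|complex.Re z| <= normc z.
Proof.
case: z => a b; rewrite /normc -sqrtr_sqr ler_sqrt ?addr_ge0 ?sqr_ge0 //.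
by rewrite lerDl sqr_ge0.
Qed.

Lemma normc_Im (z : C) : `|complex.Im z| <= normc z.
Proof.
case: z => a b; rewrite /normc -sqrtr_sqr ler_sqrt ?addr_ge0 ?sqr_ge0 //.
by rewrite lerDr sqr_ge0.
Qed.

Lemma ltC_normc (z e : C) : 0 < e -> (`|z| < e) = (normc z < complex.Re e).
Proof. by case: e => a b; rewrite ltcE /= => /andP [/eqP -> _]; rewrite ltcE /= eqxx. Qed.

Lemma tends_to_complex (x y : nat -> R) Lx Ly : tends_to x Lx -> tends_to y Ly ->
  tends_to (fun m => (x m)%:C + 'i * (y m)%:C) (Lx%:C + 'i * Ly%:C).
Proof.
move=> hx hy e he; have he' : 0 < complex.Re e / 2.
  by rewrite divr_gt0 //; move: he; rewrite ltcE => /andP [].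
have [Nx hNx] := hx _ he'; have [Ny hNy] := hy _ he'.
exists (maxn Nx Ny) => m; rewrite geq_max => /andP [hmx hmy].
have -> : (x m)%:C + 'i * (y m)%:C - (Lx%:C + 'i * Ly%:C)
        = (x m - Lx)%:C + 'i * (y m - Ly)%:C.
  by rewrite !rmorphB mulrBr opprD addrACA.
rewrite ltC_normc // (splitr (complex.Re e)); apply: le_lt_trans (le_normcD _ _) _.
by rewrite normcM normc_i mul1r !normc_real; apply: ltrD; [apply: hNx | apply: hNy].
Qed.

Lemma abs_summable_tends_toC (u : nat -> C) B :
  (forall m, series (fun l => normc (u l)) m <= B) -> exists L, tends_to (series u) L.
Proof.
move=> hB.
have [Lx hx] : exists L, tends_to (series (fun l => complex.Re (u l))) L.
  apply: (@abs_summable_tends_to _ _ B) => m; apply: le_trans (hB m).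
  by apply: ler_sum => l _; apply: normc_Re.
have [Ly hy] : exists L, tends_to (series (fun l => complex.Im (u l))) L.
  apply: (@abs_summable_tends_to _ _ B) => m; apply: le_trans (hB m).
  by apply: ler_sum => l _; apply: normc_Im.
exists (Lx%:C + 'i * Ly%:C); apply: eq_tends_to (tends_to_complex hx hy) => m.
rewrite /series !rmorph_sum mulr_sumr -big_split /=; apply: eq_bigr => l _.
by rewrite -complexE.
Qed.

Lemma eq_series_to (u v : nat -> C) s : u =1 v -> series_to u s -> series_to v s.
Proof. by move=> /funext ->. Qed.

Lemma series_to_tends_to (u : nat -> C) s : tends_to (series u) s -> series_to u s.
Proof. by move=> hu e he; apply: hu; rewrite ltcR. Qed.

End ComplexSeries.

(** * The shell expansion *)

Definition shell_term (R : realType) (a1 a2 : nat -> R[i]) (n j r : nat) :=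
  a1 (j + r)%N * a2 (n - j + r)%N.

Definition words_usum (R : realType) (kappa : nat) (F : seq nat -> R[i]) (T : R[i]) :=
  forall e : R, 0 < e -> exists2 F0, all (reduced kappa.+1 kappa.+1) F0 &
    forall Fs, uniq Fs -> all (reduced kappa.+1 kappa.+1) Fs -> {subset F0 <= Fs} ->
      `|\sum_(z <- Fs) F z - T| < e%:C%C.

Section ShellExpansion.
Variable R : realType.
Local Notation C := R[i].
Variable kappa : nat.
Local Notation K := kappa.+1.
Variable w : seq nat.
Hypothesis hw : reduced K K w.
Local Notation n := (size w).
Local Notation low_words := (low_words kappa w).
Local Notation height := (height w).
Variables (a1 a2 : nat -> C) (M1 M2 : R).
Hypothesis hb1 : forall Z, uniq Z -> all (reduced K K) Z ->
  \sum_(z <- Z) normc (a1 (size z)) ^+ 2 <= M1.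
Hypothesis hb2 : forall Z, uniq Z -> all (reduced K K) Z ->
  \sum_(z <- Z) normc (a2 (word_dist z w)) ^+ 2 <= M2.

Definition summand z := a1 (size z) * a2 (word_dist z w).
Local Notation term := (shell_term a1 a2 n).
Local Notation count := (shell_count kappa n).

Lemma summand_shell j r z : (j <= n)%N -> z \in shell kappa w j r -> summand z = term j r.
Proof.
move=> hj hz; have [_ hs hl] := shell_props hw hj hz.
by rewrite /summand /shell_term /word_dist hs hl; congr (_ * a2 _); lia.
Qed.

Lemma big_low_words_summand (V : nmodType) (F : C -> V) m :
  \sum_(z <- low_words m) F (summand z)
  = \sum_(0 <= j < n.+1) series (fun r => F (term j r) *+ count j r) m.
Proof.
rewrite big_low_words; apply: eq_big_nat => j /andP [_ hj]; apply: eq_bigr => r _.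
rewrite (eq_big_seq (fun=> F (term j r))) => [|z /(summand_shell hj) -> //].
by rewrite big_const_seq count_predT -(size_shell hw r hj) iter_addr_0.
Qed.

Definition low_sum m := \sum_(z <- low_words m) summand z.

Lemma low_sumE m :
  low_sum m = \sum_(0 <= j < n.+1) series (fun r => term j r *+ count j r) m.
Proof. exact: (big_low_words_summand (fun x : C => x)). Qed.

Definition low_mass m := \sum_(z <- low_words m) normc (summand z).

Lemma low_massE m :
  low_mass m = \sum_(0 <= j < n.+1) series (fun r => normc (term j r) *+ count j r) m.
Proof. exact: (big_low_words_summand (@normc R)). Qed.

Lemma low_mass_nondecreasing m : low_mass m <= low_mass m.+1.
Proof.
rewrite !low_massE; apply: ler_sum => j _.
by rewrite /series big_nat_recr //= lerDl mulrn_wge0 ?normc_ge0.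
Qed.

Lemma low_mass_le m : low_mass m <= (M1 + M2) / 2.
Proof.
have hlow : all (reduced K K) (low_words m).
  by apply/allP => z; rewrite (mem_low_words hw) => /andP [].
apply: le_trans (_ : \sum_(z <- low_words m)
   (normc (a1 (size z)) ^+ 2 + normc (a2 (word_dist z w)) ^+ 2) / 2 <= _).
  apply: ler_sum => z _; rewrite /summand normcM.
  have := sqr_ge0 (normc (a1 (size z)) - normc (a2 (word_dist z w))).
  rewrite sqrrB; lra.
rewrite -mulr_suml big_split ler_pM2r ?invr_gt0 ?ltr0n //.
by apply: lerD; [apply: hb1 | apply: hb2]; rewrite ?uniq_low_words.
Qed.

Lemma shell_series_abs_le j m : (j <= n)%N ->
  series (fun r => normc (term j r *+ count j r)) m <= (M1 + M2) / 2.
Proof.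
move=> hj; rewrite /series; under eq_bigr do rewrite normcMn.
apply: le_trans (low_mass_le m); rewrite low_massE.
rewrite [leRHS](bigD1_seq j) ?mem_index_iota ?iota_uniq //=.
rewrite lerDl; apply: sumr_ge0 => i _; apply: sumr_ge0 => r _.
by rewrite mulrn_wge0 ?normc_ge0.
Qed.

Lemma tail_mass_le Fs m M : uniq Fs -> {subset Fs <= low_words M} -> (m <= M)%N ->
  `|\sum_(z <- Fs | ~~ (height z < m)%N) summand z| <= (low_mass M - low_mass m)%:C%C.
Proof.
move=> uF sFM hmM; apply: le_trans (ler_norm_sum _ _ _) _.
rewrite -big_filter -rmorph_sum lecR.
apply: le_trans (@ler_sum_subset _ _ _ [seq z <- low_words M | ~~ (height z < m)%N] _
  _ _ _ (fun z => normc_ge0 _)) _.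
- exact: filter_uniq.
- exact/filter_uniq/uniq_low_words.
- by move=> z; rewrite !mem_filter => /andP [-> /sFM].
have sLM : {subset low_words m <= low_words M}.
  by move=> z; rewrite !(mem_low_words hw) => /andP [-> /leq_trans]; apply.
have aM : all (reduced K K) (low_words M).
  by apply/allP => z; rewrite (mem_low_words hw) => /andP [].
rewrite big_filter /low_mass [X in _ <= X - _](bigID (fun z => height z < m)%N) /=.
by rewrite (sum_low_words_filter hw _ (uniq_low_words hw M) aM sLM) addrC addrK.
Qed.

(* The partial sums over [low_words m] converge to the sum of the shell
   series, and whatever a finite family adds outside [low_words m] is bounded
   by a tail of the convergent [low_mass]. *)
Lemma shell_expansion_words : exists S : nat -> C,
  (forall j, (j <= n)%N -> tends_to (series (fun r => term j r *+ count j r)) (S j)) /\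
  words_usum kappa summand (\sum_(0 <= j < n.+1) S j).
Proof.
have [S hS] : {S : nat -> C & forall j,
    (j <= n)%N -> tends_to (series (fun r => term j r *+ count j r)) (S j)}.
  apply: (@choice _ _ (fun j S =>
    (j <= n)%N -> tends_to (series (fun r => term j r *+ count j r)) S)) => j.
  case: (leqP j n) => hj; last by exists 0.
  by have [S hS] := abs_summable_tends_toC (fun m => shell_series_abs_le m hj); exists S.
exists S; split=> // e he.
have hQ : tends_to low_sum (\sum_(0 <= j < n.+1) S j).
  apply: eq_tends_to (tends_to_sum _) => [m | j]; first by rewrite low_sumE.
  by rewrite mem_index_iota => /andP [_ hj]; apply: hS.
have he2 : 0 < e / 2 by rewrite divr_gt0.
have [N1 hN1] := tends_to_cauchy
  (nondecreasing_tends_to low_mass_nondecreasing low_mass_le) he2.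
have [N2 hN2] : exists N, forall m, (N <= m)%N ->
    `|low_sum m - \sum_(0 <= j < n.+1) S j| < (e / 2)%:C%C.
  by apply: hQ; rewrite ltcR.
exists (low_words (maxn N1 N2)).
  by apply/allP => z; rewrite (mem_low_words hw) => /andP [].
move=> Fs uF aF sF; have [M hmM sFM] := low_words_exhaust hw (maxn N1 N2) aF.
rewrite (bigID (fun z => height z < maxn N1 N2)%N) /= (sum_low_words_filter hw _ uF aF sF).
rewrite addrAC (splitr e) rmorphD; apply: le_lt_trans (ler_normD _ _) _.
apply: ltr_leD; first by apply: hN2; apply: leq_maxr.
apply: le_trans (tail_mass_le uF sFM hmM) _; rewrite lecR; apply: le_trans (ler_norm _) _.
by apply/ltW/hN1; rewrite ?(leq_trans _ hmM) ?leq_maxl.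
Qed.

End ShellExpansion.

Section VertexLevel.
Variable R : realType.
Local Notation C := R[i].
Variable kappa : nat.
Local Notation K := kappa.+1.

Lemma in_A_column_bound (a : nat -> C) : in_A kappa a -> exists M : R,
  forall (S : seq (vertex kappa)) y, uniq S -> \sum_(x <- S) normc (a (tdist x y)) ^+ 2 <= M.
Proof.
case=> M hM; exists M => S y uS.
have e : \sum_(x <- S) `|\sum_(y0 <- [:: y]) a (tdist x y0) * 1| ^+ 2
       = (\sum_(x <- S) normc (a (tdist x y)) ^+ 2)%:C%C.
  by rewrite rmorph_sum; apply: eq_bigr => x _; rewrite big_seq1 mulr1 rmorphXn.
by have := hM [:: y] S (fun=> 1) erefl uS; rewrite e big_seq1 normr1 expr1n mulr1 lecR.
Qed.

Lemma words_column_bound (a : nat -> C) M (v0 : vertex kappa) u :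
  (forall (S : seq (vertex kappa)) y, uniq S -> \sum_(x <- S) normc (a (tdist x y)) ^+ 2 <= M) ->
  reduced K K u -> forall Z, uniq Z -> all (reduced K K) Z ->
  \sum_(z <- Z) normc (a (word_dist z u)) ^+ 2 <= M.
Proof.
move=> hM hu Z uZ aZ.
have uZ' : uniq (map (vertex_at v0) Z).
  rewrite map_inj_in_uniq // => x y hx hy e.
  by rewrite -(vertex_atK v0 (allP aZ x hx)) e vertex_atK ?(allP aZ y hy).
apply: le_trans (hM _ (vertex_at v0 u) uZ'); rewrite big_map le_eqVlt; apply/orP; left.
apply/eqP/eq_big_seq => z hz.
by rewrite (tdist_word_at v0) !vertex_atK ?(allP aZ z hz).
Qed.

Lemma has_usum_word_at (v0 : vertex kappa) (F : seq nat -> C) T :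
  words_usum kappa F T -> has_usum (fun x => F (word_at v0 x)) T.
Proof.
move=> hF e /hF [F0 aF0 hF0]; exists (map (vertex_at v0) F0) => Fs uFs sFs.
rewrite -(big_map (word_at v0) xpredT F); apply: hF0.
- by rewrite map_inj_uniq //; apply: word_at_inj.
- by apply/allP => _ /mapP [x _ ->]; apply: reduced_word_at.
- move=> z hz; rewrite -(vertex_atK v0 (allP aF0 z hz)).
  by apply/map_f/sFs/map_f.
Qed.

Lemma shell_expansion (a1 a2 : nat -> C) (v0 vn : vertex kappa) n :
  in_A kappa a1 -> in_A kappa a2 -> tdist v0 vn = n ->
  exists S : nat -> C,
    (forall j, (j <= n)%N -> tends_to
       (series (fun r => shell_term a1 a2 n j r *+ shell_count kappa n j r)) (S j)) /\
    has_usum (fun x => a1 (tdist v0 x) * a2 (tdist x vn)) (\sum_(0 <= j < n.+1) S j).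
Proof.
move=> h1 h2 <-; have hw := reduced_word_at v0 vn; rewrite -size_word_at.
have [M1 /(words_column_bound v0) hb1] := in_A_column_bound h1.
have [M2 /(words_column_bound v0) hb2] := in_A_column_bound h2.
have hb1' Z : uniq Z -> all (reduced K K) Z -> \sum_(z <- Z) normc (a1 (size z)) ^+ 2 <= M1.
  by under eq_bigr do rewrite -word_dist_nil; apply: hb1.
have [S [hS hU]] := shell_expansion_words hw hb1' (hb2 _ hw).
exists S; split=> //; have := has_usum_word_at v0 hU.
congr has_usum; apply: funext => x.
by rewrite /summand size_word_at (tdist_word_at v0 x vn).
Qed.

End VertexLevel.

Lemma big_nat_ends (V : nmodType) n (F : nat -> V) : (0 < n)%N ->
  \sum_(0 <= j < n.+1) F j = F 0%N + F n + \sum_(1 <= j < n) F j.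
Proof. by move=> hn; rewrite big_ltn // big_nat_recr //= addrA addrAC. Qed.

Section ShellCoefficients.
Variable R : realType.
Local Notation C := R[i].
Variables (kappa : nat) (a1 a2 : nat -> C).
Local Notation shell_series n j :=
  (series (fun r => shell_term a1 a2 n j r *+ shell_count kappa n j r)).

Lemma shell_series_root S : tends_to (shell_series 0 0) S ->
  series_to (fun l => kappa.+1%:R * kappa%:R ^+ l * a1 l.+1 * a2 l.+1) (S - a1 0%N * a2 0%N).
Proof.
move/tends_to_series_succ; rewrite /shell_term mulr1n => h.
apply/series_to_tends_to/(eq_tends_to _ h) => m; apply: eq_bigr => l _.
by rewrite /shell_count /= !subn0 -mulr_natl natrM natrX !mulrA.
Qed.

Lemma shell_count_ends n r : (0 < n)%N ->
  shell_count kappa n 0 r = (kappa ^ r)%N /\ shell_count kappa n n r = (kappa ^ r)%N.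
Proof. by move=> hn; case: r => [|r] //=; rewrite hn ltnn /= !subn0 subn1 expnS. Qed.

Lemma shell_series_ends n S0 Sn : (0 < n)%N ->
  tends_to (shell_series n 0) S0 -> tends_to (shell_series n n) Sn ->
  series_to (fun l => kappa%:R ^+ l * (a1 l * a2 (l + n)%N + a1 (l + n)%N * a2 l))
            (S0 + Sn).
Proof.
move=> hn h0 hn'; apply/series_to_tends_to/(eq_tends_to _ (tends_toD h0 hn')) => m.
rewrite /series -big_split; apply: eq_bigr => l _ /=.
have [-> ->] := shell_count_ends l hn.
by rewrite /shell_term add0n subn0 subnn add0n (addnC n l) -natrX mulr_natl mulrnDl.
Qed.

Lemma shell_series_mid n i S : (1 <= kappa)%N -> (0 < i < n)%N ->
  tends_to (shell_series n i) S ->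
  series_to (fun l => (kappa%:R - 1) * kappa%:R ^+ l * a1 (l.+1 + i)%N * a2 (l.+1 + n - i)%N)
            (S - a1 i * a2 (n - i)%N).
Proof.
move=> hk /andP [hi hin] /tends_to_series_succ; rewrite /shell_term !addn0 mulr1n => h.
apply/series_to_tends_to/(eq_tends_to _ h) => m; apply: eq_bigr => l _.
rewrite /shell_count hi hin /= subSS subn0 -mulr_natl natrM natrX natrB // !mulrA.
by rewrite (addnC i) (addnC (n - i)%N) addnBA // ltnW.
Qed.

End ShellCoefficients.

Theorem lemma2p1 (R : realType) (kappa : nat) (hk : (1 <= kappa)%N)
  (alpha1 alpha2 : nat -> R[i])
  (h1 : in_A kappa alpha1) (h2 : in_A kappa alpha2)
  (v : nat -> vertex kappa)
  (hv : forall k n : nat, tdist (v k) (v n) = `|(k%:Z - n%:Z)%R|%N) :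
  (* n = 0 *)
  (exists s : R[i],
     series_to (fun l => (kappa.+1)%:R * (kappa%:R) ^+ l
                         * alpha1 l.+1 * alpha2 l.+1) s /\
     has_usum (fun x => alpha1 (tdist (v 0%N) x) * alpha2 (tdist x (v 0%N)))
       (alpha1 0%N * alpha2 0%N + s))
  /\
  (* n = 1 *)
  (exists s : R[i],
     series_to (fun l => (kappa%:R) ^+ l
                  * (alpha1 l * alpha2 l.+1 + alpha1 l.+1 * alpha2 l)) s /\
     has_usum (fun x => alpha1 (tdist (v 0%N) x) * alpha2 (tdist x (v 1%N))) s)
  /\
  (* n >= 2 *)
  (forall n : nat, (2 <= n)%N ->
   exists (s : R[i]) (t : nat -> R[i]),
     series_to (fun l => (kappa%:R) ^+ l
                  * (alpha1 l * alpha2 (l + n)%N + alpha1 (l + n)%N * alpha2 l)) s /\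
     (forall i : nat, (1 <= i <= n.-1)%N ->
        series_to (fun l => (kappa%:R - 1) * (kappa%:R) ^+ l
                     * alpha1 (l.+1 + i)%N * alpha2 (l.+1 + n - i)%N) (t i)) /\
     has_usum (fun x => alpha1 (tdist (v 0%N) x) * alpha2 (tdist x (v n)))
       (s + \sum_(1 <= i < n) alpha1 i * alpha2 (n - i)%N
          + \sum_(1 <= i < n) t i)).
Proof.
have dist0 n : tdist (v 0%N) (v n) = n by rewrite hv sub0r abszN absz_nat.
have shells n := shell_expansion h1 h2 (dist0 n).
split; [|split].
- have [S [hS hU]] := shells 0%N.
  exists (S 0%N - alpha1 0%N * alpha2 0%N); split; first exact: shell_series_root (hS 0%N _).
  by rewrite addrC subrK; move: hU; rewrite big_nat1.
- have [S [hS hU]] := shells 1%N.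
  exists (S 0%N + S 1%N); split.
    apply: eq_series_to (shell_series_ends (n := 1) isT (hS 0%N isT) (hS 1%N isT)).
    by move=> l; rewrite addn1.
  by move: hU; rewrite big_nat_recr //= big_nat1.
- move=> n hn; have [S [hS hU]] := shells n.
  exists (S 0%N + S n), (fun i => S i - alpha1 i * alpha2 (n - i)%N); split; [|split].
  + by apply: shell_series_ends; [apply: leq_trans hn | apply: hS | apply/hS/leqnn].
  + move=> i hi; apply: shell_series_mid => //; last by apply: hS; lia.
    by apply/andP; lia.
  + by rewrite sumrB addrA addrAC addrK; move: hU; rewrite big_nat_ends ?(ltnW hn).
Qed.
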